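(* Let $m\ge1$ and let $u=u_1\cdots u_r$ and $v=v_1\cdots v_s$ be weakly increasing words with letters in $[m]=\{1,\dots,m\}$, with $r\le s$. Let $c=(\text{length of the first row of }P(uv))-s$. Then for every $k\ge1$, $$v^{(k)}_t<u^{(k)}_{t+c}\quad\text{for all } t\in[rk-c],$$ where $x_t$ denotes the $t$-th letter of a word $x$.
   Context: $P(w)$ is the Robinson–Schensted row-insertion tableau of the word $w$, and $uv$ is concatenation. For a word $x=x_1\cdots x_n$, $x+m=(x_1+m)\cdots(x_n+m)$, and $x^{(k)}=x\,(x+m)\,(x+2m)\cdots(x+(k-1)m)$ (concatenation, with the given $m$). *)

From mathcomp Require Import all_boot.
Set Implicit Arguments. Unset Strict Implicit. Unset Printing Implicit Defensive.

(* Words are sequences of positive naturals; a tableau is a list of rows,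
   top row first, each row a weakly increasing list. *)

Fixpoint ins_row (row : seq nat) (x : nat) : seq nat * option nat :=
  match row with
  | [::] => ([:: x], None)
  | y :: row' =>
      if x < y then (x :: row', Some y)
      else let: (r, b) := ins_row row' x in (y :: r, b)
  end.

Fixpoint rs_insert (t : seq (seq nat)) (x : nat) : seq (seq nat) :=
  match t with
  | [::] => [:: [:: x]]
  | row :: t' =>
      let: (row', b) := ins_row row x in
      match b with
      | None => row' :: t'
      | Some y => row' :: rs_insert t' y
      end
  end.

Definition RS_P (w : seq nat) : seq (seq nat) := foldl rs_insert [::] w.

Definition first_row_len (w : seq nat) : nat := size (head [::] (RS_P w)).

Definition shift_word (x : seq nat) (m : nat) : seq nat := map (fun a => a + m) x.

Definition word_pow (x : seq nat) (m k : nat) : seq nat :=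
  flatten [seq shift_word x (i * m) | i <- iota 0 k].

(* 1-indexed letter x_t. *)
Definition letter (x : seq nat) (t : nat) : nat := nth 0 x t.-1.

From mathcomp Require Import all_boot zify.

Set Implicit Arguments. Unset Strict Implicit. Unset Printing Implicit Defensive.

(* Write U = u^(k), V = v^(k) and L = first_row_len (uv), so
   c = L - s.  Suppose U_(t+c) <= V_t =: y for some t.  The letter y lies in
   the j-th block of V, i.e. y = b + jm with b a letter of v, so counting
   letters of U below y and of V strictly below y block by block gives
     t + c <= #{U <= y} = j r + #{u_i <= b},
     t - 1 >= #{V <  y} = j s + #{v_i <  b}.
   Subtracting, and using r <= s, we get c < #{u_i <= b} + #{v_i >= b} - s.
   But the letters u_i <= b followed by the letters v_i >= b form a weakly
   increasing subsequence of uv, and by Schensted's theorem the first row of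
   P(uv) is at least as long as any weakly increasing subsequence, so that
   quantity is at most L - s = c: a contradiction. *)

Definition row_insert (row : seq nat) (x : nat) : seq nat := (ins_row row x).1.

Lemma head_rs_insert t x : head [::] (rs_insert t x) = row_insert (head [::] t) x.
Proof.
case: t => [|row t] //=; rewrite /row_insert.
by case: (ins_row row x) => r [b|].
Qed.

Lemma head_foldl_rs_insert t w :
  head [::] (foldl rs_insert t w) = foldl row_insert (head [::] t) w.
Proof. by elim: w t => [|x w IHw] t //=; rewrite IHw head_rs_insert. Qed.

Lemma first_row_lenE w : first_row_len w = size (foldl row_insert [::] w).
Proof. by rewrite /first_row_len /RS_P head_foldl_rs_insert. Qed.

Lemma count_le_row_insert z row x :
  count (fun a => a <= z) row <= count (fun a => a <= z) (row_insert row x).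
Proof.
rewrite /row_insert; elim: row => [|y row IHrow] //=.
case: ifP => [x_lt_y|_] /=.
  by rewrite leq_add2r; case: (leqP y z) => // /(leq_trans (ltnW x_lt_y)) ->.
by move: IHrow; case: (ins_row row x) => r b /= IHrow; rewrite leq_add2l.
Qed.

Lemma count_le_row_insert_self row x :
  (count (fun a => a <= x) row).+1 <= count (fun a => a <= x) (row_insert row x).
Proof.
rewrite /row_insert; elim: row => [|y row IHrow] /=; first by rewrite leqnn.
case: ifP => x_lt_y /=; first by rewrite leqnn (leqNgt y x) x_lt_y.
by move: IHrow; case: (ins_row row x) => r b /= IHrow; rewrite -addnS leq_add2l.
Qed.

(* Invariant behind Schensted's theorem: inserting w raises the number of
   first-row entries <= (last letter of s) by at least the length of any
   weakly increasing subsequence s of w (all of whose letters are >= z). *)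
Lemma count_le_foldl_subseq w s row z :
  sorted leq (z :: s) -> subseq s w ->
  count (fun a => a <= z) row + size s
    <= count (fun a => a <= last z s) (foldl row_insert row w).
Proof.
elim: w s row z => [|x w IHw] s row z s_sorted.
  by rewrite subseq0 => /eqP ->; rewrite addn0.
have skip_x : subseq s w -> count (fun a => a <= z) row + size s
    <= count (fun a => a <= last z s) (foldl row_insert row (x :: w)).
  move=> /(IHw _ (row_insert row x) _ s_sorted); apply: leq_trans.
  by rewrite leq_add2r count_le_row_insert.
case: s s_sorted skip_x => [|y s] s_sorted skip_x; first by move: (skip_x (sub0seq w)).
rewrite /=; case: eqP => [y_eq_x|_]; last exact: skip_x.
move: s_sorted; rewrite {}y_eq_x /= => /andP[z_le_x x_s_sorted] s_sub_w.
have := IHw s (row_insert row x) x x_s_sorted s_sub_w.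
apply: leq_trans; rewrite addnS -addSn leq_add2r.
apply: leq_trans (count_le_row_insert_self row x); rewrite ltnS.
by apply: sub_count => a /= a_le_z; apply: leq_trans z_le_x.
Qed.

Lemma sorted_subseq_first_row_len s w :
  subseq s w -> sorted leq s -> size s <= first_row_len w.
Proof.
move=> s_sub_w s_sorted; rewrite first_row_lenE.
have s0_sorted : sorted leq (0 :: s) by rewrite /= path_min_sorted //; apply/allP.
have := @count_le_foldl_subseq w s [::] 0 s0_sorted s_sub_w.
by rewrite /= add0n => /leq_trans; apply; exact: count_size.
Qed.

(* For weakly increasing u and v and any threshold a, the letters of u that
   are <= a followed by the letters of v that are >= a form a weakly
   increasing subsequence of uv. *)
Lemma count_split_first_row_len u v a : sorted leq u -> sorted leq v ->
  count (fun b => b <= a) u + count (fun b => a <= b) v <= first_row_len (u ++ v).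
Proof.
move=> u_sorted v_sorted; rewrite -!size_filter -size_cat.
apply: sorted_subseq_first_row_len; first by rewrite cat_subseq ?filter_subseq.
rewrite (sorted_pairwise leq_trans) pairwise_cat -!(sorted_pairwise leq_trans).
rewrite !(sorted_filter leq_trans) // !andbT.
by apply/allrelP => x y; rewrite !mem_filter => /andP[x_le_a _] /andP[a_le_y _];
  apply: leq_trans a_le_y.
Qed.

Lemma count_lt_nth_sorted s i y : sorted leq s -> i < size s -> y <= nth 0 s i ->
  count (fun a => a < y) s <= i.
Proof.
elim: s i => [|x s IHs] i //= xs_sorted.
have s_sorted := path_sorted xs_sorted.
have x_le_s := order_path_min leq_trans xs_sorted.
case: i => [|i] /= i_lt y_le.
  rewrite ltnNge y_le (@eq_in_count _ _ pred0) ?count_pred0 // => a /(allP x_le_s) x_le_a.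
  by rewrite /= ltnNge (leq_trans y_le x_le_a).
exact: leq_add (leq_b1 _) (IHs _ s_sorted i_lt y_le).
Qed.

Lemma nth_lt_count_sorted s i y : sorted leq s -> i < size s -> nth 0 s i < y ->
  i < count (fun a => a < y) s.
Proof.
elim: s i => [|x s IHs] i //= xs_sorted.
have s_sorted := path_sorted xs_sorted.
have x_le_s := order_path_min leq_trans xs_sorted.
case: i => [|i] /= i_lt nth_lt; first by rewrite nth_lt.
have x_le_nth : x <= nth 0 s i by apply: (allP x_le_s); exact: mem_nth.
by rewrite (leq_ltn_trans x_le_nth nth_lt) add1n ltnS; apply: IHs.
Qed.

Lemma word_powS x m k : word_pow x m k.+1 = word_pow x m k ++ shift_word x (k * m).
Proof. by rewrite /word_pow -addn1 iotaD map_cat flatten_cat /= cats0 add0n. Qed.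

Lemma size_word_pow x m k : size (word_pow x m k) = size x * k.
Proof.
elim: k => [|k IHk]; first by rewrite muln0.
by rewrite word_powS size_cat IHk size_map mulnS addnC.
Qed.

Lemma mem_word_pow x m k y : y \in word_pow x m k ->
  exists2 j, j < k & exists2 b, b \in x & y = b + j * m.
Proof.
elim: k => [|k IHk] //; rewrite word_powS mem_cat => /orP[/IHk|].
  by case=> j j_lt_k ex_b; exists j => //; apply: ltnW.
by case/mapP=> b b_in_x ->; exists k => //; exists b.
Qed.

Section WordsOverAlphabet.

Variables (m : nat) (x : seq nat).
Hypothesis x_letters : all (fun a => 1 <= a <= m) x.

(* If x is weakly increasing, so is x^(k): the blocks occupy the disjoint,
   increasing ranges [1 + jm, m + jm]. *)
Lemma sorted_word_pow k : sorted leq x -> sorted leq (word_pow x m k).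
Proof.
move=> x_sorted; elim: k => [|k IHk] //.
rewrite word_powS (sorted_pairwise leq_trans) pairwise_cat.
rewrite -!(sorted_pairwise leq_trans) IHk /=; apply/andP; split.
  apply/allrelP => _ _ /mem_word_pow[j j_lt_k [a a_in_x ->]] /mapP[b b_in_x ->].
  have /andP[_ a_le_m] := allP x_letters a a_in_x.
  have /andP[b_ge1 _] := allP x_letters b b_in_x.
  have : j.+1 * m <= k * m by rewrite leq_mul2r j_lt_k orbT.
  rewrite mulSn; lia.
rewrite /shift_word sorted_map; apply: sub_sorted x_sorted => a b /=.
by rewrite leq_add2r.
Qed.

(* Counting the letters of x^(k) below a threshold d + jm, block by block:
   the blocks before the j-th lie entirely below it, those after entirely
   above it, and in the j-th block it cuts like d cuts x. *)
Lemma count_word_pow_below k j d : 1 <= d <= m.+1 ->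
  count (fun a => a < d + j * m) (word_pow x m k)
    = minn j k * size x + (j < k) * count (fun a => a < d) x.
Proof.
move=> /andP[d_ge1 d_le]; elim: k => [|k IHk]; first by rewrite minn0.
rewrite word_powS count_cat IHk /shift_word count_map.
case: (ltngtP k j) => [k_lt_j|j_lt_k|->].
- rewrite [X in _ + X](eq_in_count (a2 := predT)) ?count_predT; last first.
    move=> a /(allP x_letters) /andP[_ a_le_m] /=.
    have : k.+1 * m <= j * m by rewrite leq_mul2r k_lt_j orbT.
    rewrite mulSn; lia.
  by rewrite (minn_idPr k_lt_j) (leq_gtF k_lt_j) !mul0n !addn0 mulSn addnC.
- rewrite [X in _ + X](eq_in_count (a2 := pred0)) ?count_pred0; last first.
    move=> a /(allP x_letters) /andP[a_ge1 _] /=.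
    have : j.+1 * m <= k * m by rewrite leq_mul2r j_lt_k orbT.
    rewrite mulSn; lia.
  by rewrite (minn_idPl (leqW (ltnW j_lt_k))) ltnS (ltnW j_lt_k) addn0.
- rewrite (minn_idPl (leqnSn j)) ltnSn mul0n addn0 mul1n.
  by congr (_ + _); apply: eq_count => a /=; rewrite ltn_add2r.
Qed.

Lemma count_word_pow_block k j d : j < k -> 1 <= d <= m.+1 ->
  count (fun a => a < d + j * m) (word_pow x m k) = j * size x + count (fun a => a < d) x.
Proof.
by move=> j_lt_k /count_word_pow_below ->; rewrite (minn_idPl (ltnW j_lt_k)) j_lt_k mul1n.
Qed.

End WordsOverAlphabet.

Theorem mainTheorem7 (m : nat) (u v : seq nat) :
  1 <= m ->
  all (fun a => 1 <= a <= m) u -> all (fun a => 1 <= a <= m) v ->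
  sorted leq u -> sorted leq v ->
  size u <= size v ->
  let c := first_row_len (u ++ v) - size v in
  forall k : nat, 1 <= k ->
  forall t : nat, 1 <= t <= size u * k - c ->
    letter (word_pow v m k) t < letter (word_pow u m k) (t + c).
Proof.
move=> _ u_letters v_letters u_sorted v_sorted r_le_s c k _ t /andP[t_ge1 t_le].
rewrite /letter ltnNge; apply/negP.
set U := word_pow u m k; set V := word_pow v m k; set y := nth 0 V t.-1 => U_le_y.
have rk_le_sk : size u * k <= size v * k by rewrite leq_mul2r r_le_s orbT.
have t_in_V : t.-1 < size V by rewrite size_word_pow; lia.
have tc_in_U : (t + c).-1 < size U by rewrite size_word_pow; lia.
have [j j_lt_k [b b_in_v]] := mem_word_pow (mem_nth 0 t_in_V); rewrite -/y => y_eq.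
have /andP[b_ge1 b_le_m] := allP v_letters b b_in_v.
have U_count : t + c <= j * size u + count (fun a => a <= b) u.
  have := nth_lt_count_sorted (sorted_word_pow u_letters k u_sorted) tc_in_U
    (U_le_y : _ < y.+1).
  rewrite y_eq -addSn count_word_pow_block // (eq_count (a2 := fun a => a <= b)) //; lia.
have V_count : j * size v + count (fun a => a < b) v <= t.-1.
  have := count_lt_nth_sorted (sorted_word_pow v_letters k v_sorted) t_in_V (leqnn y).
  by rewrite y_eq count_word_pow_block // b_ge1 leqW.
have first_row := count_split_first_row_len b u_sorted v_sorted.
have v_split : count (fun a => a < b) v + count (fun a => b <= a) v = size v.
  by rewrite -(count_predC (fun a => a < b)); congr (_ + _); apply: eq_count => a;
    rewrite /= -leqNgt.
have : j * size u <= j * size v by rewrite leq_mul2l r_le_s orbT.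
rewrite /c in U_count; lia.
Qed.
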